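(* Let $n=2^t m$ with $t\ge 0$ and $m$ odd, and let $D_n$ be the dihedral group of order $2n$. Then $\mathrm{mixlen}(D_n)\le t+m$.
   Context: For a finite group $G$, a random subproduct is a random element $g_1^{\epsilon_1}\cdots g_k^{\epsilon_k}$ with $g_1,\dots,g_k\in G$ fixed and $\epsilon_1,\dots,\epsilon_k$ independent Bernoulli random variables, $\epsilon_i\sim\mathrm{Ber}(p_i)$, $p_i\in[0,1]$. $\mathrm{mixlen}(G)$ is the minimal number $k$ of factors in a random subproduct that is distributed exactly uniformly on $G$. *)

From HB Require Import structures.
From mathcomp Require Import all_boot all_order all_algebra all_fingroup.
From mathcomp Require Import boolp reals.
Set Implicit Arguments. Unset Strict Implicit. Unset Printing Implicit Defensive.
Import Order.TTheory GRing.Theory Num.Theory.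

Definition subprod_prob (R : realType) (gT : finGroupType) (k : nat)
    (g : 'I_k -> gT) (p : 'I_k -> R) (x : gT) : R :=
  (\sum_(e : {ffun 'I_k -> bool}
          | (\prod_(i < k) (if e i then g i else 1))%g == x)
      \prod_(i < k) (if e i then p i else 1 - p i))%R.

Definition mixes_in (R : realType) (gT : finGroupType) (G : {group gT})
    (k : nat) : Prop :=
  exists (g : 'I_k -> gT) (p : 'I_k -> R),
    [/\ forall i, g i \in G,
        forall i, (0 <= p i <= 1)%R &
        forall x, x \in G -> subprod_prob g p x = (#|G|%:R)^-1%R].

Definition mixlen (R : realType) (gT : finGroupType) (G : {group gT}) : nat :=
  match pselect (exists k, `[< mixes_in R G k >]) with
  | left h => ex_minn h
  | right _ => 0%N
  end.

(* G is a dihedral group of order 2n (n >= 1): presentation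
   <x, y | x^n = y^2 = 1, x^y = x^-1>. This covers n = 1, 2 as well. *)
Definition is_dihedral (gT : finGroupType) (G : {group gT}) (n : nat) : Prop :=
  (G \isog Grp (x : y : x ^+ n, y ^+ 2, x ^ y = x^-1))%g.

From mathcomp Require Import all_boot all_order all_algebra all_fingroup.
From mathcomp Require Import boolp reals.
From mathcomp Require Import all_solvable.
From mathcomp Require Import ring lra zify.
Set Implicit Arguments. Unset Strict Implicit. Unset Printing Implicit Defensive.
Import GRing.Theory Num.Theory.

(* Every law constructed below is invariant under right multiplication by y,
   so it is described by the probability w i of x^i (equivalently of x^i y).
   Prepending the reflection x^c y with probability q turns w into
   i |-> (1 - q) w i + q w (c - i mod n).  Start from y with probability 1/2,
   i.e. the uniform law on {1, y}; the reflections x^c y with probabilities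
   1/(m - c + 1), c = 1, ..., m - 1, spread the mass uniformly over the
   rotations 0, ..., m - 1; then each reflection x^(2L - 1) y with probability
   1/2, L = m, 2m, ..., 2^(t-1) m, doubles the support.  This uses
   1 + (m - 1) + t factors. *)

Definition fcons T k (a : T) (f : 'I_k -> T) : 'I_k.+1 -> T :=
  fun i => if unlift ord0 i is Some j then f j else a.

Lemma fcons0 T k (a : T) (f : 'I_k -> T) : fcons a f ord0 = a.
Proof. by rewrite /fcons unlift_none. Qed.

Lemma fconsS T k (a : T) (f : 'I_k -> T) j : fcons a f (lift ord0 j) = f j.
Proof. by rewrite /fcons liftK. Qed.

Section SubproductRecursion.
Variables (R : realType) (gT : finGroupType).
Local Open Scope ring_scope.

Lemma subprod_prob0 (g : 'I_0 -> gT) (p : 'I_0 -> R) z :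
  subprod_prob g p z = (z == 1%g)%:R.
Proof.
rewrite /subprod_prob big_mkcond (big_pred1 [ffun=> false]) => [|e].
  by rewrite !big_ord0 eq_sym; case: eqP.
by apply/esym/eqP/ffunP => -[].
Qed.

Lemma subprod_prob_cons k (g0 : gT) (g : 'I_k -> gT) (p0 : R) (p : 'I_k -> R) z :
  subprod_prob (fcons g0 g) (fcons p0 p) z =
    (1 - p0) * subprod_prob g p z + p0 * subprod_prob g p (g0^-1 * z)%g.
Proof.
pose join (be : bool * {ffun 'I_k -> bool}) : {ffun 'I_k.+1 -> bool} :=
  [ffun i => fcons be.1 be.2 i].
have join_bij : bijective join.
  exists (fun e : {ffun 'I_k.+1 -> bool} => (e ord0, [ffun j => e (lift ord0 j)])).
    move=> [b e]; rewrite /join /= ffunE fcons0; congr pair.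
    by apply/ffunP => j; rewrite !ffunE fconsS.
  move=> e; apply/ffunP => i; rewrite ffunE /fcons /=.
  by case: unliftP => [j ->|->]; rewrite ?ffunE.
have prod_join b e :
    (\prod_(i < k.+1) (if join (b, e) i then fcons g0 g i else 1))%g =
    ((if b then g0 else 1) * \prod_(i < k) (if e i then g i else 1))%g.
  by rewrite big_ord_recl !ffunE !fcons0; under eq_bigr do rewrite ffunE !fconsS.
have weight_join b e :
    \prod_(i < k.+1) (if join (b, e) i then fcons p0 p i else 1 - fcons p0 p i) =
    (if b then p0 else 1 - p0) * \prod_(i < k) (if e i then p i else 1 - p i).
  by rewrite big_ord_recl !ffunE !fcons0; under eq_bigr do rewrite ffunE !fconsS.
have sum_pair (F : bool * {ffun 'I_k -> bool} -> R) :
    \sum_be F be = \sum_b \sum_e F (b, e).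
  by rewrite pair_bigA; apply: eq_bigr => -[].
rewrite /subprod_prob (reindex join) /=; last exact: onW_bij.
rewrite big_mkcond sum_pair big_bool /= addrC !big_distrr.
congr (_ + _); rewrite [RHS]big_mkcond; apply: eq_bigr => e _.
  by rewrite prod_join weight_join mul1g.
by rewrite prod_join weight_join -(inj_eq (mulgI g0) _ (g0^-1 * z)%g) mulKVg.
Qed.

End SubproductRecursion.

Lemma mixlen_le (R : realType) (gT : finGroupType) (G : {group gT}) k :
  mixes_in R G k -> (mixlen R G <= k)%N.
Proof.
move=> mixk; rewrite /mixlen; case: pselect => [h|[]]; last by exists k; apply/asboolP.
by case: ex_minnP => k' _; apply; apply/asboolP.
Qed.

Definition refl_index n c i := if i <= c then c - i else c + n - i.

Lemma refl_index_lt n c i : c < n -> i < n -> refl_index n c i < n.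
Proof. by rewrite /refl_index; case: (leqP i c); lia. Qed.

Section DihedralNormalForm.
Variables (gT : finGroupType) (x y : gT) (n : nat).
Hypotheses (xn : (x ^+ n = 1)%g) (y2 : (y ^+ 2 = 1)%g) (xy : (x ^ y = x^-1)%g).
Local Open Scope group_scope.

Lemma reflection_mul c i (b : bool) : (c < n)%N -> (i < n)%N ->
  (x ^+ c * y)^-1 * (x ^+ i * y ^+ b) = x ^+ refl_index n c i * y ^+ ~~ b.
Proof.
move=> lt_cn lt_in.
have yV : y^-1 = y by apply/eqP; rewrite eq_invg_mul -(expgS y 1) y2.
have yM : y ^+ b = y * y ^+ ~~ b by case: b; rewrite /= ?mulg1 // -(expgS y 1) y2.
have xVc : (x ^+ c)^-1 = x ^+ (n - c).
  by apply/eqP; rewrite eq_invg_mul -expgD subnKC ?xn ?(ltnW lt_cn).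
have xV : (x ^+ (n - c + i))^-1 = x ^+ refl_index n c i.
  apply/eqP; rewrite eq_invg_mul -expgD /refl_index.
  case: leqP => le_ic; first by rewrite (_ : _ + _ = n)%N ?xn //; lia.
  by rewrite (_ : _ + _ = n * 2)%N ?expgM ?xn ?expg1n //; lia.
by rewrite invgM yV xVc yM -xV -expgVn -xy -conjXg /conjg yV expgD !mulgA.
Qed.

Hypothesis n_gt0 : (0 < n)%N.

Definition dihedral_elt (ib : 'I_n * bool) : gT := x ^+ ib.1 * y ^+ ib.2.

Lemma dihedral_eltE : <[x]> <*> <[y]> = dihedral_elt @: setT.
Proof.
apply/setP => z; rewrite norm_joinEr ?norms_cycle ?xy ?groupV ?cycle_id //.
apply/idP/imsetP => [/mulsgP[_ _ /cycleP[a ->] /cycleP[c ->] ->] | [[i b] _ ->]].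
  exists (Ordinal (ltn_pmod a n_gt0), odd c) => //.
  by rewrite /dihedral_elt /= (expg_mod _ xn) -modn2 (expg_mod _ y2).
by rewrite mem_mulg ?mem_cycle.
Qed.

Lemma card_dihedral_le : #|<[x]> <*> <[y]>| <= n.*2.
Proof.
rewrite dihedral_eltE (leq_trans (leq_imset_card _ _)) //.
by rewrite cardsT card_prod card_ord card_bool muln2.
Qed.

Hypothesis card_xy : #|<[x]> <*> <[y]>| = n.*2.

Lemma dihedral_elt_inj : injective dihedral_elt.
Proof.
have /imset_injP inj : #|dihedral_elt @: setT| == #|[set: 'I_n * bool]|.
  by rewrite -dihedral_eltE card_xy cardsT card_prod card_ord card_bool muln2.
by move=> u v; apply: inj; rewrite inE.
Qed.

Lemma eq_dihedral_elt i j (b c : bool) : (i < n)%N -> (j < n)%N ->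
  (x ^+ i * y ^+ b == x ^+ j * y ^+ c) = (i == j) && (b == c).
Proof.
move=> lt_in lt_jn.
have := inj_eq dihedral_elt_inj (Ordinal lt_in, b) (Ordinal lt_jn, c).
by rewrite xpair_eqE.
Qed.

End DihedralNormalForm.

Section DihedralPresentation.
Variables (gT : finGroupType) (G : {group gT}) (n : nat).
Hypothesis dihG : is_dihedral G n.
Local Open Scope group_scope.

Lemma dihedral_generators : exists x y : gT,
  [/\ <[x]> <*> <[y]> = G, x ^+ n = 1, y ^+ 2 = 1 & x ^ y = x^-1].
Proof.
have /existsP[[x y]] := isoGrp_hom dihG; rewrite /= !xpair_eqE.
by case/and4P => /eqP defG /eqP xn /eqP y2 /eqP xy; exists x, y.
Qed.

(* 'D_(2n) has this presentation only for n > 1; for n = 1 we use 'Z_2. *)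
Lemma dihedral_model : (0 < n)%N -> exists rT : finGroupType, exists H : {group rT},
  #|H| = n.*2 /\ H \homg Grp (x : y : x ^+ n, y ^+ 2, x ^ y = x^-1).
Proof.
case: n => [//|[_ | n1 _]].
  exists _, [set: 'Z_2]%G; split; first by rewrite cardsT card_ord.
  apply/existsP; exists (1, Zp1) => /=; rewrite !xpair_eqE /= cycle1 joing1G.
  by apply/andP; split; apply/eqP; [exact/esym/Zp_cycle | rewrite conj1g invg1].
exists _, [set: 'D_(n1.+2).*2]%G; split; first by rewrite card_dihedral.
by rewrite -(@Grp_dihedral n1.+2) ?homg_refl.
Qed.

Lemma card_dihedral_presentation : (0 < n)%N -> #|G| = n.*2.
Proof.
move=> n_gt0; have [x [y [defG xn y2 xy]]] := dihedral_generators.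
have [rT [H [cardH homH]]] := dihedral_model n_gt0.
apply/eqP; rewrite eqn_leq -{1}defG card_dihedral_le //= -cardH dvdn_leq //.
by rewrite card_homg // dihG.
Qed.

End DihedralPresentation.

Section DihedralLaws.
Variables (R : realType) (gT : finGroupType) (G : {group gT}) (x y : gT) (n : nat).
Hypotheses (n_gt0 : (0 < n)%N) (xn : (x ^+ n = 1)%g) (y2 : (y ^+ 2 = 1)%g).
Hypotheses (xy : (x ^ y = x^-1)%g) (defG : (<[x]> <*> <[y]>)%g = G) (cardG : #|G| = n.*2).
Local Open Scope ring_scope.

Let card_xy : #|(<[x]> <*> <[y]>)%g| = n.*2. Proof. by rewrite defG. Qed.
Let Gx : x \in G. Proof. by rewrite -defG mem_gen // inE cycle_id. Qed.
Let Gy : y \in G. Proof. by rewrite -defG mem_gen // inE cycle_id orbT. Qed.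

Definition achievable k (w : nat -> R) :=
  exists (g : 'I_k -> gT) (p : 'I_k -> R),
  [/\ forall j, g j \in G, forall j, 0 <= p j <= 1 &
      forall i (b : bool), (i < n)%N -> subprod_prob g p (x ^+ i * y ^+ b)%g = w i].

Lemma achievable_eq k w w' : achievable k w ->
  (forall i, (i < n)%N -> w i = w' i) -> achievable k w'.
Proof.
move=> [g [p [Gg p01 law]]] ww'; exists g, p.
by split=> // i b lt_in; rewrite law ?ww'.
Qed.

Lemma achievable_half_y : achievable 1 (fun i => (i == 0)%:R / 2).
Proof.
exists (fcons y (fun=> 1%g)), (fcons (1 / 2) (fun=> 0)); split.
- by move=> j; rewrite /fcons; case: unlift.
- by move=> j; rewrite /fcons; case: unlift => [_|]; apply/andP; split; lra.
move=> i b lt_in; rewrite subprod_prob_cons !subprod_prob0.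
have eq_xy := eq_dihedral_elt xn y2 xy n_gt0 card_xy.
have -> : (x ^+ i * y ^+ b == 1)%g = (i == 0%N) && ~~ b.
  rewrite -[1%g](mulg1 (x ^+ 0)%g) -[1%g in X in _ == X](expg0 y).
  by rewrite (eq_xy i 0 b false); case: b.
have -> : (y^-1 * (x ^+ i * y ^+ b) == 1)%g = (i == 0%N) && b.
  rewrite -eq_mulVg1 eq_sym -[y in X in _ == X](mul1g y) -(expg0 x)%g.
  by rewrite -[y in X in _ == X](expg1 y) (eq_xy i 0 b true); case: b.
by case: (i == 0%N); case: b => /=; lra.
Qed.

Lemma achievable_cons k w c q : achievable k w -> (c < n)%N -> 0 <= q <= 1 ->
  achievable k.+1 (fun i => (1 - q) * w i + q * w (refl_index n c i)).
Proof.
move=> [g [p [Gg p01 law]]] lt_cn q01.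
exists (fcons (x ^+ c * y)%g g), (fcons q p); split.
- by move=> j; rewrite /fcons; case: unlift => [j'|]; rewrite ?Gg ?groupM ?groupX.
- by move=> j; rewrite /fcons; case: unlift => [j'|]; rewrite ?p01.
move=> i b lt_in.
by rewrite subprod_prob_cons (reflection_mul xn y2 xy) // !law // refl_index_lt.
Qed.

Definition skewed_law m j i : R :=
  (if i == 0%N then (m - j)%:R else if (i <= j)%N then 1 else 0) / (2 * m%:R).

Definition uniform_law L i : R := (if (i < L)%N then 1 else 0) / (2 * L%:R).

Lemma achievable_skewed m j : (0 < m <= n)%N -> (j < m)%N ->
  achievable j.+1 (skewed_law m j).
Proof.
move=> /andP[m_gt0 le_mn]; have mR : m%:R != 0 :> R by rewrite pnatr_eq0 -lt0n.
elim: j => [_ | j IHj lt_jm].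
  apply: achievable_eq achievable_half_y _ => i _; rewrite /skewed_law subn0.
  by case: i => [|i] /=; [field | rewrite !mul0r].
have [b eq_b] : exists b, (m - j.+1 = b)%N by exists (m - j.+1)%N.
have bR : 1 + b%:R != 0 :> R by rewrite addrC natr1 pnatr_eq0.
(* 1/(b + 1) of the mass (b + 1)/2m at rotation 0 moves to rotation j + 1. *)
have q01 : 0 <= (b.+1%:R : R)^-1 <= 1 by rewrite invr_ge0 ler0n invf_le1 ?ler1n ?ltr0n.
apply: achievable_eq (achievable_cons (IHj (ltnW lt_jm)) (_ : j.+1 < n)%N q01) _.
  by lia.
move=> i lt_in; rewrite /skewed_law /refl_index eq_b (_ : m - j = b.+1)%N; last lia.
case: (leqP i j.+1) => ?; do ![case: ifP => ?]; try lia.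
all: by field; rewrite mR bR.
Qed.

Lemma achievable_uniform m : (0 < m <= n)%N -> achievable m (uniform_law m).
Proof.
move=> le_0mn; have m_gt0 : (0 < m)%N by case/andP: le_0mn.
have lt_m1m : (m.-1 < m)%N by rewrite ltn_predL.
have := achievable_skewed le_0mn lt_m1m; rewrite prednK // => A.
apply: achievable_eq A _ => i _; rewrite /skewed_law /uniform_law.
rewrite (_ : m - m.-1 = 1)%N; last by lia.
by do ![case: ifP => ?]; try lia.
Qed.

Lemma achievable_uniform_double k L : (0 < L)%N -> (L.*2 <= n)%N ->
  achievable k (uniform_law L) -> achievable k.+1 (uniform_law L.*2).
Proof.
move=> L_gt0 le_2Ln A; have LR : L%:R != 0 :> R by rewrite pnatr_eq0 -lt0n.
have q01 : 0 <= (1 / 2 : R) <= 1 by apply/andP; split; lra.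
apply: achievable_eq (achievable_cons A (_ : L.*2.-1 < n)%N q01) _; first by lia.
move=> i lt_in; rewrite /uniform_law /refl_index -mul2n natrM.
by case: (leqP i (2 * L).-1) => ?; do ![case: ifP => ?]; try lia; field.
Qed.

Lemma achievable_uniform_pow k L s : (0 < L)%N -> (2 ^ s * L <= n)%N ->
  achievable k (uniform_law L) -> achievable (k + s) (uniform_law (2 ^ s * L)).
Proof.
move=> L_gt0; elim: s => [|s IHs]; first by rewrite addn0 expn0 mul1n.
rewrite addnS expnS -mulnA mul2n => le_n A.
apply: achievable_uniform_double (IHs _ A); rewrite ?muln_gt0 ?L_gt0 ?expn_gt0 //.
by apply: leq_trans le_n; rewrite -addnn leq_addr.
Qed.

Lemma mixes_in_uniform k : achievable k (uniform_law n) -> mixes_in R G k.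
Proof.
move=> [g [p [Gg p01 law]]]; exists g, p; split=> // z.
rewrite cardG -defG (dihedral_eltE xn y2 xy n_gt0) => /imsetP[[i b] _ ->].
by rewrite law // /uniform_law ltn_ord -mul2n natrM mul1r.
Qed.

End DihedralLaws.

Theorem mainTheorem17 (R : realType) (gT : finGroupType) (G : {group gT})
    (t m : nat) :
  odd m -> is_dihedral G (2 ^ t * m) -> (mixlen R G <= t + m)%N.
Proof.
move=> odd_m dihG; have m_gt0 : (0 < m)%N by case: (m) odd_m.
set n := (2 ^ t * m)%N in dihG; have n_gt0 : (0 < n)%N by rewrite muln_gt0 expn_gt0.
have [x [y [defG xn y2 xy]]] := dihedral_generators dihG.
have cardG := card_dihedral_presentation dihG n_gt0.
apply/mixlen_le/(mixes_in_uniform n_gt0 xn y2 xy defG cardG).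
rewrite addnC; apply: achievable_uniform_pow => //.
by apply: achievable_uniform => //; rewrite m_gt0 leq_pmull ?expn_gt0.
Qed.
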